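(* Let $H$ be a complex Hilbert space, $A\in B(H)$ a nonzero positive semidefinite operator, and $T\in B_{A^{1/2}}(H)$ with $TA^{1/2}=A^{1/2}T$. Then $r_A(T)=r_A(T^{\diamond})$.
   Context: $\|x\|_A=\langle Ax,x\rangle^{1/2}$. For $S\in B(H)$, $\|S\|_A=\sup\{\|Sx\|_A : x\in\overline{R(A)},\ \|x\|_A=1\}$. $B_{A^{1/2}}(H)=\{S\in B(H): R(S^*A^{1/2})\subset R(A^{1/2})\}$. For $S\in B_{A^{1/2}}(H)$, $S^{\diamond}$ is the unique operator in $B(H)$ with $S^*A^{1/2}=A^{1/2}S^{\diamond}$ and $R(S^{\diamond})\subset\overline{R(A^{1/2})}$; $S^\diamond\in B_{A^{1/2}}(H)$. $r_A(S)=\lim_{n\to\infty}\|S^n\|_A^{1/n}$. *)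

From HB Require Import structures.
From mathcomp Require Import all_boot all_order all_algebra.
From mathcomp Require Import all_classical all_reals all_analysis.
From mathcomp Require Import complex.
Set Implicit Arguments. Unset Strict Implicit. Unset Printing Implicit Defensive.
Import Order.TTheory GRing.Theory Num.Theory.
Local Open Scope ring_scope.
Local Open Scope classical_set_scope.

Section Hilbert.
Variables (R : realType) (H : lmodType R[i]) (ip : H -> H -> R[i]).

Definition inner_product_axioms : Prop :=
  [/\ forall (a : R[i]) x y z, ip (a *: x + y) z = a * ip x z + ip y z,
      forall x y, ip y x = (ip x y)^*,
      forall x, 0 <= ip x x
    & forall x, ip x x = 0 -> x = 0].

Definition hnorm (x : H) : R := Num.sqrt (complex.Re (ip x x)).

Definition complete_ip : Prop :=
  forall u : nat -> H,
    (forall e : R, 0 < e -> exists N, forall m n, (N <= m)%N -> (N <= n)%N ->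
        hnorm (u m - u n) < e) ->
    exists l : H, forall e : R, 0 < e -> exists N, forall n, (N <= n)%N ->
        hnorm (u n - l) < e.

Definition is_hilbert : Prop := inner_product_axioms /\ complete_ip.

Definition is_linear (f : H -> H) : Prop :=
  forall (a : R[i]) x y, f (a *: x + y) = a *: f x + f y.

Definition bounded_op (f : H -> H) : Prop :=
  is_linear f /\ exists M : R, forall x, hnorm (f x) <= M * hnorm x.

Definition is_adjoint (f g : H -> H) : Prop :=
  forall x y, ip (f x) y = ip x (g y).

Definition positive_op (f : H -> H) : Prop :=
  bounded_op f /\ forall x, 0 <= ip (f x) x.

Definition range (f : H -> H) : set H := [set y | exists x, f x = y].

Definition hclosure (E : set H) : set H :=
  [set x | forall e : R, 0 < e -> exists y, E y /\ hnorm (x - y) < e].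

Definition is_sqrt_op (A Ah : H -> H) : Prop :=
  positive_op Ah /\ forall x, Ah (Ah x) = A x.

Definition Anorm (A : H -> H) (x : H) : R := Num.sqrt (complex.Re (ip (A x) x)).

Definition Aopnorm (A S : H -> H) : R :=
  sup [set Anorm A (S x) | x in [set x | hclosure (range A) x /\ Anorm A x = 1]].

Definition Aspectral_radius (A S : H -> H) : R :=
  limn (fun n : nat => Aopnorm A (iter n S) `^ (n%:R^-1)).

(* S in B_{A^{1/2}}(H), given S^* = Sadj and A^{1/2} = Ah *)
Definition in_BAhalf (Ah S Sadj : H -> H) : Prop :=
  bounded_op S /\ range (Sadj \o Ah) `<=` range Ah.

Definition is_diamond (Ah Sadj Sd : H -> H) : Prop :=
  [/\ bounded_op Sd,
      forall x, Sadj (Ah x) = Ah (Sd x)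
    & range Sd `<=` hclosure (range Ah)].

End Hilbert.

From Pilot Require Import Defs.
From HB Require Import structures.
From mathcomp Require Import all_boot all_order all_algebra.
From mathcomp Require Import all_classical all_reals all_analysis.
From mathcomp Require Import complex.
From mathcomp Require Import ring lra.
Import Order.TTheory GRing.Theory Num.Theory.
Local Open Scope ring_scope.
Local Open Scope classical_set_scope.

(* Since T commutes with A^{1/2}, so does T^*, and then (T^* )^n is the
   A-adjoint of T^n: <A T^n x, y> = <A x, (T^* )^n y>.  Cauchy-Schwarz for the
   semi-inner product <A., .> gives ||S x||_A^2 <= ||x||_A ||S' S x||_A for an
   A-adjoint pair (S, S'), whence ||S||_A = ||S'||_A.  Finally
   A^{1/2} T^diamond = T^* A^{1/2} gives ||(T^diamond)^n x||_A = ||(T^* )^n x||_A.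
   So ||T^n||_A = ||(T^diamond)^n||_A for every n: the two sequences defining
   the A-spectral radii agree termwise, whether or not they converge. *)

Lemma iter_semiconj {T U : Type} {f : T -> T} {g : U -> T} {h : U -> U} :
  (forall x, f (g x) = g (h x)) -> forall n x, iter n f (g x) = g (iter n h x).
Proof. by move=> fgh; elim=> //= n IHn x; rewrite IHn fgh. Qed.

Lemma sup_image_eq {R : realType} {T : Type} (P : set T) (f g : T -> R) :
  (forall x, P x -> f x <= sup [set g x | x in P]) ->
  (forall x, P x -> g x <= sup [set f x | x in P]) ->
  sup [set f x | x in P] = sup [set g x | x in P].
Proof.
move=> fg gf; have [[x Px]|/set0P/negP/negbNE/eqP->] := pselect (P !=set0).
  apply/le_anti/andP; split; apply: ge_sup.
  - by exists (f x), x.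
  - by move=> _ [y Py <-]; apply: fg.
  - by exists (g x), x.
  - by move=> _ [y Py <-]; apply: gf.
by rewrite !image_set0.
Qed.

Section Linear.
Context {R : realType} {H : lmodType R[i]} {S : H -> H}.
Hypothesis S_lin : is_linear S.

Lemma is_linear0 : S 0 = 0.
Proof.
have := S_lin 1 0 0; rewrite !scale1r addr0 => S0D.
by apply: (@addrI _ (S 0)); rewrite addr0 -S0D.
Qed.

Lemma is_linearD x y : S (x + y) = S x + S y.
Proof. by rewrite -[x]scale1r S_lin !scale1r. Qed.

Lemma is_linearZ a x : S (a *: x) = a *: S x.
Proof. by rewrite -[a *: x]addr0 S_lin is_linear0 addr0. Qed.

Lemma is_linearB x y : S (x - y) = S x - S y.
Proof. by rewrite is_linearD -scaleN1r is_linearZ scaleN1r. Qed.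
End Linear.

Definition rip {R : realType} {H : lmodType R[i]} (ip : H -> H -> R[i]) (x y : H) : R :=
  complex.Re (ip x y).

Section InnerProduct.
Context {R : realType} {H : lmodType R[i]} {ip : H -> H -> R[i]}.
Hypothesis ipA : inner_product_axioms ip.

Local Notation hn := (hnorm ip).

Lemma ipDZl a x y z : ip (a *: x + y) z = a * ip x z + ip y z.
Proof. by case: ipA. Qed.

Lemma ipC x y : ip y x = (ip x y)^*.
Proof. by case: ipA. Qed.

Lemma ip_ge0 x : 0 <= ip x x.
Proof. by case: ipA. Qed.

Lemma ip_eq0 x : ip x x = 0 -> x = 0.
Proof. by case: ipA => _ _ _; apply. Qed.

Lemma ip0l z : ip 0 z = 0.
Proof.
have := ipDZl 1 0 0 z; rewrite scale1r addr0 mul1r => ip0D.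
by apply: (@addrI _ (ip 0 z)); rewrite addr0 -ip0D.
Qed.

Lemma ipDl x y z : ip (x + y) z = ip x z + ip y z.
Proof. by rewrite -[x]scale1r ipDZl mul1r scale1r. Qed.

Lemma ipZl a x z : ip (a *: x) z = a * ip x z.
Proof. by rewrite -[a *: x]addr0 ipDZl ip0l addr0. Qed.

Lemma ipBl x y z : ip (x - y) z = ip x z - ip y z.
Proof. by rewrite ipDl -scaleN1r ipZl mulN1r. Qed.

Lemma ipDr z x y : ip z (x + y) = ip z x + ip z y.
Proof. by rewrite !(ipC _ z) ipDl rmorphD. Qed.

Lemma ipZr z a x : ip z (a *: x) = a^* * ip z x.
Proof. by rewrite !(ipC _ z) ipZl rmorphM. Qed.

Lemma ipBr z x y : ip z (x - y) = ip z x - ip z y.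
Proof. by rewrite !(ipC _ z) ipBl rmorphB. Qed.

Lemma ip_ext u v : (forall z, ip z u = ip z v) -> u = v.
Proof.
by move=> uv; apply/eqP; rewrite -subr_eq0; apply/eqP/ip_eq0; rewrite ipBr uv subrr.
Qed.

Lemma Re_realM (r : R) (z : R[i]) : complex.Re (r%:C%C * z) = r * complex.Re z.
Proof. by case: z => a b /=; rewrite mul0r subr0. Qed.

Lemma ripC x y : rip ip x y = rip ip y x.
Proof. by rewrite /rip [ip y x]ipC; case: (ip x y). Qed.

Lemma rip_ge0 x : 0 <= rip ip x x.
Proof. by have := ip_ge0 x; rewrite lecE => /andP[]. Qed.

Lemma hnorm_ge0 x : 0 <= hn x.
Proof. exact: sqrtr_ge0. Qed.

Lemma hnorm_sqr x : hn x ^+ 2 = rip ip x x.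
Proof. by rewrite sqr_sqrtr ?rip_ge0. Qed.

Lemma hnorm_eq0 x : hn x = 0 -> x = 0.
Proof.
move=> x0; apply: ip_eq0; have := ip_ge0 x; rewrite lecE => /andP[/eqP Im0 _].
by apply/eqP; rewrite eq_complex /= Im0 -[complex.Re _]hnorm_sqr x0 expr0n !eqxx.
Qed.

Lemma hnormZ (r : R) x : 0 <= r -> hn (r%:C%C *: x) = r * hn x.
Proof.
move=> r_ge0; rewrite /hnorm ipZl ipZr conj_Creal ?complex_real //.
by rewrite !Re_realM mulrA -expr2 sqrtrM ?sqr_ge0 // sqrtr_sqr ger0_norm.
Qed.

Lemma hnorm_CauchySchwarz x y : rip ip x y <= hn x * hn y.
Proof.
have [x0|x_neq0] := eqVneq (hn x) 0; first by rewrite x0 mul0r (hnorm_eq0 _ x0) /rip ip0l.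
have [y0|y_neq0] := eqVneq (hn y) 0; first by rewrite y0 mulr0 (hnorm_eq0 _ y0) ripC /rip ip0l.
have x_gt0 : 0 < hn x by rewrite lt0r x_neq0 hnorm_ge0.
have y_gt0 : 0 < hn y by rewrite lt0r y_neq0 hnorm_ge0.
have := rip_ge0 ((hn y)%:C%C *: x - (hn x)%:C%C *: y).
rewrite /rip !(ipBl, ipBr, ipZl, ipZr) !conj_Creal ?complex_real //.
rewrite !raddfB /= !Re_realM -/(rip ip x x) -/(rip ip y y) -/(rip ip x y) -/(rip ip y x).
rewrite (ripC y x) -!hnorm_sqr => ge0.
have xy_gt0 : 0 < hn x * hn y by rewrite mulr_gt0.
nra.
Qed.

Lemma ip_nonneg_selfadjoint (B : H -> H) : is_linear B -> (forall x, 0 <= ip (B x) x) ->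
  is_adjoint ip B B.
Proof.
move=> B_lin B_ge0 x y; apply/eqP; rewrite -subr_eq0; apply/eqP.
pose s u v := ip (B u) v - ip u (B v).
have s_diag u : s u u = 0.
  by rewrite /s [ip u _]ipC conj_Creal ?ger0_real ?subrr.
have s_polar c : s (x + c *: y) (x + c *: y) = c^* * s x y + c * s y x.
  move: (s_diag x) (s_diag y); rewrite /s !(is_linearD B_lin, is_linearZ B_lin).
  rewrite !(ipDl, ipDr, ipZl, ipZr) => /subr0_eq-> /subr0_eq->; ring.
have s_sym : s y x = s x y.
  have := s_polar 'i; rewrite s_diag conjCi mulNr addrC -mulrBr => /esym/eqP.
  by rewrite mulf_eq0 (negbTE (neq0Ci _)) subr_eq0 => /eqP.
have := s_polar 1; rewrite s_diag rmorph1 !mul1r s_sym => /esym/eqP.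
by rewrite -mulr2n mulrn_eq0 => /eqP.
Qed.

Lemma bound_ge0 (S : H -> H) : (exists M, forall x, hn (S x) <= M * hn x) ->
  exists2 M, 0 <= M & forall x, hn (S x) <= M * hn x.
Proof.
move=> [M S_le]; exists `|M| => // x.
by apply: le_trans (S_le x) _; rewrite ler_wpM2r ?hnorm_ge0 ?ler_norm.
Qed.

Section Adjoint.
Context {T Tadj : H -> H}.
Hypothesis T_adj : is_adjoint ip T Tadj.

Lemma adjoint_linear : is_linear Tadj.
Proof.
move=> a x y; apply: ip_ext => z.
by rewrite -T_adj !(ipDr, ipZr) !T_adj.
Qed.

Lemma adjoint_bounded : bounded_op ip T -> bounded_op ip Tadj.
Proof.
move=> [_ /bound_ge0[M M_ge0 T_le]]; split; first exact: adjoint_linear.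
exists M => y; set u := Tadj y.
have u_sqr : hn u ^+ 2 <= M * hn y * hn u.
  rewrite hnorm_sqr /rip {2}/u -T_adj -/(rip _ _ _).
  apply: le_trans (hnorm_CauchySchwarz _ _) _.
  by rewrite mulrAC ler_wpM2r ?hnorm_ge0 ?T_le.
have := hnorm_ge0 u; have : 0 <= M * hn y by rewrite mulr_ge0 ?hnorm_ge0.
nra.
Qed.

Lemma adjoint_commute {B : H -> H} : is_adjoint ip B B ->
  (forall x, T (B x) = B (T x)) -> forall x, Tadj (B x) = B (Tadj x).
Proof.
move=> B_sa TB x; apply: ip_ext => z.
by rewrite -T_adj -(B_sa (T z)) -TB T_adj B_sa.
Qed.

Lemma adjoint_iter n : is_adjoint ip (iter n T) (iter n Tadj).
Proof.
elim: n => // n IHn x y.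
by rewrite iterS T_adj IHn -iterSr.
Qed.
End Adjoint.

Lemma bounded_op_iter {S : H -> H} n : bounded_op ip S -> bounded_op ip (iter n S).
Proof.
move=> [S_lin /bound_ge0[M M_ge0 S_le]].
elim: n => [|n [IH_lin [K IH_le]]]; first by split=> //; exists 1 => x; rewrite mul1r.
split=> [a x y|]; first by rewrite /= IH_lin S_lin.
exists (M * K) => x /=; rewrite -mulrA.
by apply: le_trans (S_le _) _; rewrite ler_wpM2l.
Qed.
End InnerProduct.

Lemma Aopnorm_ext {R : realType} {H : lmodType R[i]} (ip : H -> H -> R[i]) (A S S' : H -> H) :
  (forall x, Anorm ip A (S x) = Anorm ip A (S' x)) -> Aopnorm ip A S = Aopnorm ip A S'.
Proof. by move=> SS'; rewrite /Aopnorm (eq_imagel (fun x _ => SS' x)). Qed.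

Section SemiNorm.
Context {R : realType} {H : lmodType R[i]} {ip : H -> H -> R[i]} {A Ah : H -> H}.
Hypothesis ipA : inner_product_axioms ip.
Hypothesis Ah_sqrt : is_sqrt_op ip A Ah.

Local Notation hn := (hnorm ip).
Local Notation An := (Anorm ip A).
Local Notation C := (hclosure ip (Defs.range A)).

Lemma Ah_linear : is_linear Ah.
Proof. by case: Ah_sqrt => [[[]]]. Qed.

Lemma A_sqrt x : A x = Ah (Ah x).
Proof. by case: Ah_sqrt. Qed.

Lemma Ah_selfadjoint : is_adjoint ip Ah Ah.
Proof. by case: Ah_sqrt => [[[Ah_lin _] Ah_ge0] _]; apply: ip_nonneg_selfadjoint. Qed.

Lemma ip_A_sqrt x y : ip (A x) y = ip (Ah x) (Ah y).
Proof. by rewrite A_sqrt Ah_selfadjoint. Qed.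

Lemma A_selfadjoint : is_adjoint ip A A.
Proof. by move=> x y; rewrite !A_sqrt 2!Ah_selfadjoint. Qed.

Lemma Anorm_sqrt x : An x = hn (Ah x).
Proof. by rewrite /Anorm ip_A_sqrt. Qed.

Lemma Anorm_ge0 x : 0 <= An x.
Proof. exact: sqrtr_ge0. Qed.

Lemma Anorm_sqr x : An x ^+ 2 = rip ip (A x) x.
Proof. by rewrite Anorm_sqrt hnorm_sqr // /rip ip_A_sqrt. Qed.

Lemma AnormZ (r : R) x : 0 <= r -> An (r%:C%C *: x) = r * An x.
Proof. by move=> r_ge0; rewrite !Anorm_sqrt (is_linearZ Ah_linear) hnormZ. Qed.

Lemma Anorm_CauchySchwarz x y : rip ip (A x) y <= An x * An y.
Proof. by rewrite /rip ip_A_sqrt -/(rip _ _ _) !Anorm_sqrt hnorm_CauchySchwarz. Qed.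

Lemma hclosure_range_stable {S : H -> H} : bounded_op ip S ->
  (forall y, S (A y) = A (S y)) -> forall x, C x -> C (S x).
Proof.
move=> [S_lin /bound_ge0[M M_ge0 S_le]] SA x Cx e e_gt0.
have M1_gt0 : 0 < M + 1 by rewrite ltr_wpDl.
have [_ [[y <-]]] := Cx (e / (M + 1)) (divr_gt0 e_gt0 M1_gt0).
rewrite ltr_pdivlMr // => xAy_lt.
exists (S (A y)); split; first by exists (S y); rewrite SA.
rewrite -(is_linearB S_lin); apply: le_lt_trans (S_le _) _.
have := hnorm_ge0 (x - A y); nra.
Qed.

Lemma bounded_opZ (r : R) : 0 <= r -> bounded_op ip (fun v => r%:C%C *: v).
Proof.
move=> r_ge0; split; last by exists r => x; rewrite hnormZ.
by move=> a x y; rewrite scalerDr !scalerA mulrC.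
Qed.

Lemma hclosure_rangeZ (r : R) x : 0 <= r -> C x -> C (r%:C%C *: x).
Proof.
move=> r_ge0 Cx; apply: (hclosure_range_stable (bounded_opZ _ r_ge0) _ _ Cx) => y.
by rewrite !A_sqrt !(is_linearZ Ah_linear).
Qed.

Definition A_bounded (S : H -> H) := exists K, forall x, An (S x) <= K * An x.

Lemma Anorm_le_Aopnorm {S : H -> H} : is_linear S -> A_bounded S ->
  forall z, C z -> An (S z) <= Aopnorm ip A S * An z.
Proof.
move=> S_lin [K S_le] z Cz.
have [z0|z_neq0] := eqVneq (An z) 0.
  by rewrite z0 mulr0; apply: le_trans (S_le z) _; rewrite z0 mulr0.
have z_gt0 : 0 < An z by rewrite lt0r z_neq0 Anorm_ge0.
have r_ge0 : 0 <= (An z)^-1 by rewrite invr_ge0 ltW.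
have ub : has_ubound [set An (S x) | x in [set x | C x /\ An x = 1]].
  by exists K => _ [x [_ x1] <-]; apply: le_trans (S_le x) _; rewrite x1 mulr1.
have := ub_le_sup ub (imageP _ (_ : [set x | C x /\ An x = 1] ((An z)^-1%:C%C *: z))).
rewrite (is_linearZ S_lin) !AnormZ // mulrC ler_pdivrMr //.
by apply; split; [apply: hclosure_rangeZ | rewrite AnormZ // mulVf].
Qed.

Definition is_Aadjoint (S S' : H -> H) := forall x y, ip (A (S x)) y = ip (A x) (S' y).

Lemma is_Aadjoint_sym {S S' : H -> H} : is_Aadjoint S S' -> is_Aadjoint S' S.
Proof.
move=> SS' x y.
by rewrite A_selfadjoint (ipC ipA (A y)) -SS' -(ipC ipA) -A_selfadjoint.
Qed.

Lemma Anorm_le_Aopnorm_Aadjoint {S S' : H -> H} : is_linear S' -> A_bounded S' ->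
  (forall x, C x -> C (S x)) -> is_Aadjoint S S' ->
  forall x, C x -> An x = 1 -> An (S x) <= Aopnorm ip A S'.
Proof.
move=> S'_lin S'_bdd SC SS' x Cx x1.
have S'_le := Anorm_le_Aopnorm S'_lin S'_bdd.
have Sx_sqr : An (S x) ^+ 2 <= Aopnorm ip A S' * An (S x).
  rewrite Anorm_sqr /rip SS' -/(rip _ _ _).
  by apply: le_trans (Anorm_CauchySchwarz _ _) _; rewrite x1 mul1r; exact/S'_le/SC.
have := S'_le _ Cx; rewrite x1 mulr1.
have := Anorm_ge0 (S x); have := Anorm_ge0 (S' x); nra.
Qed.

Lemma Aopnorm_Aadjoint {S S' : H -> H} :
  is_linear S -> A_bounded S -> (forall x, C x -> C (S x)) ->
  is_linear S' -> A_bounded S' -> (forall x, C x -> C (S' x)) ->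
  is_Aadjoint S S' -> Aopnorm ip A S = Aopnorm ip A S'.
Proof.
move=> S_lin S_bdd SC S'_lin S'_bdd S'C SS'.
apply: sup_image_eq => x [Cx x1]; apply: Anorm_le_Aopnorm_Aadjoint => //.
exact: is_Aadjoint_sym.
Qed.

Section Commuting.
Context {S : H -> H}.
Hypothesis S_Ah : forall x, S (Ah x) = Ah (S x).

Lemma commute_A x : S (A x) = A (S x).
Proof. by rewrite !A_sqrt !S_Ah. Qed.

Lemma A_bounded_commute : bounded_op ip S -> A_bounded S.
Proof.
by move=> [_ [M S_le]]; exists M => x; rewrite !Anorm_sqrt -S_Ah.
Qed.

Lemma is_Aadjoint_commute S' : is_adjoint ip S S' ->
  (forall x, S' (Ah x) = Ah (S' x)) -> is_Aadjoint S S'.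
Proof.
by move=> SS' S'_Ah x y; rewrite !ip_A_sqrt -S_Ah SS' S'_Ah.
Qed.
End Commuting.

Lemma Aopnorm_adjoint_commute {S S' : H -> H} : bounded_op ip S -> is_adjoint ip S S' ->
  (forall x, S (Ah x) = Ah (S x)) -> (forall x, S' (Ah x) = Ah (S' x)) ->
  Aopnorm ip A S = Aopnorm ip A S'.
Proof.
move=> S_bdd SS' S_Ah S'_Ah; have S'_bdd := adjoint_bounded ipA SS' S_bdd.
apply: Aopnorm_Aadjoint; first exact: S_bdd.1; last exact: is_Aadjoint_commute.
- exact: A_bounded_commute.
- exact: hclosure_range_stable S_bdd (commute_A S_Ah).
- exact: S'_bdd.1.
- exact: A_bounded_commute.
- exact: hclosure_range_stable S'_bdd (commute_A S'_Ah).
Qed.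
End SemiNorm.

Theorem mainTheorem8 (R : realType) (H : lmodType R[i]) (ip : H -> H -> R[i])
  (A Ah T Tadj Td : H -> H) :
  is_hilbert ip ->
  positive_op ip A -> (exists x, A x != 0) ->
  is_sqrt_op ip A Ah ->
  bounded_op ip T -> is_adjoint ip T Tadj ->
  in_BAhalf ip Ah T Tadj ->
  (forall x, T (Ah x) = Ah (T x)) ->
  is_diamond ip Ah Tadj Td ->
  Aspectral_radius ip A T = Aspectral_radius ip A Td.
Proof.
move=> [ipA _] _ _ Ah_sqrt T_bdd T_adj _ T_Ah [_ Tadj_Ah_Td _].
have Tadj_Ah := adjoint_commute ipA T_adj (Ah_selfadjoint ipA Ah_sqrt) T_Ah.
rewrite /Aspectral_radius; do 2 f_equal; apply/funext => n; congr (_ `^ _).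
rewrite (Aopnorm_adjoint_commute ipA Ah_sqrt (bounded_op_iter n T_bdd)
  (adjoint_iter T_adj n) (iter_semiconj T_Ah n) (iter_semiconj Tadj_Ah n)).
apply: Aopnorm_ext => x.
by rewrite !(Anorm_sqrt ipA Ah_sqrt) -(iter_semiconj Tadj_Ah) (iter_semiconj Tadj_Ah_Td).
Qed.
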